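(* Let $Y\subset B^+$ and $Z\subset A^+$ be finite composable sets with bijection $\beta:B\to Z$, and let $X=Y\circ_\beta Z$ be a trim decomposition. Let $\mathcal{B}=(Q,1,1)$ be the prefix automaton of $Y$ (over $B$), let $\mathcal{T}=(P,1,1)$ be the prefix transducer of $Z$ with respect to $\beta$, and let $\mathcal{A}=\mathcal{B}\circ\mathcal{T}$. Then: (a) $\mathcal{A}$ recognizes $X^*$ with multiplicities, i.e. for every $w\in A^*$ the number of paths from $(1,1)$ to $(1,1)$ in $\mathcal{A}$ labeled $w$ equals the number of factorizations of $w$ into words of $X$. (b) If $Y$ is complete, then the map $\rho:Q\times P\to P$, $\rho(q,p)=p$, is a reduction from $\mathcal{A}$ onto the prefix automaton of $Z$. (c) For $q,q'\in Q$ and $b\in B$, there is an edge $q\xrightarrow{b}q'$ in $\mathcal{B}$ if and only if there is a path in $\mathcal{A}$ from $(q,1)$ to $(q',1)$ labeled $\beta(b)$ all of whose intermediate states lie outside $\rho^{-1}(1)=Q\times\{1\}$.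
   Context: Two finite sets $Y\subset B^*$, $Z\subset A^*$ are composable if there is a bijection $\beta:B\to Z$ and every letter of $B$ occurs in some word of $Y$; extending $\beta$ to a morphism $B^*\to A^*$, $X=\beta(Y)$ is the composition $Y\circ_\beta Z$. The decomposition is trim if the restriction of $\beta$ to $Y$ is injective. A set $Y\subset B^*$ is complete if every word of $B^*$ is a factor of some word of $Y^*$. The prefix automaton of a finite set $X\subset A^+$ has as states the proper prefixes of words of $X$ (including the empty word $1$, which is initial and terminal), edges $p\xrightarrow{a}pa$ whenever $pa$ is a proper prefix of a word of $X$, and edges $p\xrightarrow{a}1$ whenever $pa\in X$. The prefix transducer of $Z$ (w.r.t. $\beta$) has the states $P$ of the prefix automaton of $Z$, edges $p\xrightarrow{a|1}pa$ when $pa\in P$, and edges $p\xrightarrow{a|b}1$ when $pa=\beta(b)\in Z$. The automaton $\mathcal{B}\circ\mathcal{T}$ (wreath product) has state set $Q\times P$, initial and terminal state $(1,1)$, and an edge $(q,p)\xrightarrow{a}(q',p')$ whenever $\mathcal{T}$ has an edge $p\xrightarrow{a|w}p'$ and either $w=1$ and $q'=q$, or $w=b\in B$ and $\mathcal{B}$ has an edge $q\xrightarrow{b}q'$. Recognition with multiplicities: the number of paths from initial to terminal state labeled $w$ equals the number of factorizations of $w$ into words of $X$. A reduction from $(P_1,i,t)$ onto $(Q_1,j,u)$ is a surjective map $\rho$ with $\rho(i)=j$, $\rho(t)=u$, such that for all states $q,q'$ and words $w$, there is a path $q\xrightarrow{w}q'$ in the target iff there is a path $p\xrightarrow{w}p'$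 in the source with $\rho(p)=q$, $\rho(p')=q'$. *)

(* Words over an alphabet T are [seq T]; the empty word is [::]. *)
From mathcomp Require Import all_boot.
Set Implicit Arguments. Unset Strict Implicit. Unset Printing Implicit Defensive.

Definition morph (B A : Type) (beta : B -> seq A) (u : seq B) : seq A :=
  flatten (map beta u).

Section Prefix.
Variable T : eqType.
Variable X : seq (seq T).

Definition pa_state (p : seq T) : bool :=
  has (fun x => prefix p x && (size p < size x)) X.

Definition pa_edge (p : seq T) (a : T) (p' : seq T) : bool :=
  pa_state p &&
  (((p' == rcons p a) && pa_state (rcons p a)) || ((p' == [::]) && (rcons p a \in X))).
End Prefix.

(* output None stands for the empty word 1, Some b for the letter b *)
Definition tr_edge (A : eqType) (B : Type) (Z : seq (seq A)) (beta : B -> seq A)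
    (p : seq A) (a : A) (o : option B) (p' : seq A) : bool :=
  pa_state Z p &&
  match o with
  | None => (p' == rcons p a) && pa_state Z (rcons p a)
  | Some b => (p' == [::]) && (rcons p a == beta b) && (beta b \in Z)
  end.

Definition wr_edge (A B : finType) (Y : seq (seq B)) (Z : seq (seq A))
    (beta : B -> seq A) (s : seq B * seq A) (a : A) (s' : seq B * seq A) : bool :=
  [&& pa_state Y s.1, pa_state Z s.2, pa_state Y s'.1, pa_state Z s'.2 &
  [exists o : option B,
     tr_edge Z beta s.2 a o s'.2 &&
     match o with
     | None => s'.1 == s.1
     | Some b => pa_edge Y s.1 b s'.1
     end]].

(* ---------- paths: l is the list of states visited after the start s,
   the path is labeled w and ends in t ---------- *)
Fixpoint is_path (S T : eqType) (edge : S -> T -> S -> bool)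
    (s : S) (w : seq T) (l : seq S) (t : S) : bool :=
  match w, l with
  | [::], [::] => s == t
  | a :: w', s' :: l' => edge s a s' && is_path edge s' w' l' t
  | _, _ => false
  end.

Definition has_card (T : eqType) (P : T -> bool) (n : nat) : Prop :=
  exists s : seq T, [/\ uniq s, (forall x, (x \in s) = P x) & size s = n].

Definition factorization (A : eqType) (X : seq (seq A)) (w : seq A)
    (f : seq (seq A)) : bool :=
  all (mem X) f && (flatten f == w).

Definition complete (B : eqType) (Y : seq (seq B)) : Prop :=
  forall u : seq B, exists f : seq (seq B), all (mem Y) f /\ infix u (flatten f).

Definition is_reduction (S1 S2 T : eqType)
    (st1 : S1 -> bool) (e1 : S1 -> T -> S1 -> bool) (i1 t1 : S1)
    (st2 : S2 -> bool) (e2 : S2 -> T -> S2 -> bool) (i2 t2 : S2)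
    (rho : S1 -> S2) : Prop :=
  [/\ (forall x, st1 x -> st2 (rho x)),
      (forall y, st2 y -> exists x, st1 x /\ rho x = y),
      rho i1 = i2, rho t1 = t2 &
      forall y y', st2 y -> st2 y' -> forall w : seq T,
        (exists l, is_path e2 y w l y') <->
        (exists x x', [/\ st1 x, st1 x', rho x = y, rho x' = y' &
                         exists l, is_path e1 x w l x'])].

From mathcomp Require Import all_boot.
Set Implicit Arguments. Unset Strict Implicit. Unset Printing Implicit Defensive.

(* The wreath automaton A = B o T reads a word of A^*; its second component
   runs the prefix automaton of Z and, each time it completes a word beta b
   of Z, the first component performs the edge labeled b of the prefix
   automaton B of Y.  The proof makes this simulation explicit:
   - [letter_run] is the run of A reading beta b from (q,1) to (q',1) when
     q -b-> q' in B; every run from (q,1) back to Q x {1} starts with such a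
     run ([run_first_letter]), which gives (c) by injectivity of beta;
   - [word_run q y] iterates this along a word y of B, so that runs of A from
     (1,1) to (1,1) are exactly concatenations of [word_run 1 y], y in Y;
     cutting a run at its visits of (1,1) is a bijection with factorizations
     in X = beta(Y) (trimness makes y recoverable from beta(y)): this is (a);
   - projecting on P maps runs of A to runs of the prefix automaton of Z and,
     conversely, a run of Z lifts to A from any state that can read the
     emitted letters; completeness of Y supplies such a state: this is (b). *)

Lemma is_path_cat (S T : eqType) (e : S -> T -> S -> bool) s w1 l1 m w2 l2 t :
  is_path e s w1 l1 m -> is_path e m w2 l2 t -> is_path e s (w1 ++ w2) (l1 ++ l2) t.
Proof.
elim: w1 s l1 => [|a w1 IH] s [|s' l1] //=; first by move=> /eqP ->.
by case/andP=> -> /IH H /H.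
Qed.

Lemma is_path_split (S T : eqType) (e : S -> T -> S -> bool) s u1 u2 l t :
  is_path e s (u1 ++ u2) l t -> exists m l1 l2,
   [/\ l = l1 ++ l2, is_path e s u1 l1 m & is_path e m u2 l2 t].
Proof.
elim: u1 s l => [|a u1 IH] s l /=; first by move=> H; exists s, [::], l.
case: l => // s' l /andP[He /IH [m [l1 [l2 [-> H1 H2]]]]].
by exists m, (s' :: l1), l2; split => //=; rewrite He.
Qed.

Lemma is_path_size (S T : eqType) (e : S -> T -> S -> bool) s w l t :
  is_path e s w l t -> size l = size w.
Proof. by elim: w s l => [|a w IH] s [|s' l] //= /andP[_ /IH ->]. Qed.

Lemma is_path_nil (S T : eqType) (e : S -> T -> S -> bool) s l t :
  is_path e s [::] l t -> l = [::] /\ s = t.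
Proof. by case: l => //= /eqP. Qed.

(* Two predicates in bijection (via mutually inverse maps) have the same
   cardinality; this turns (a) into the construction of a bijection. *)
Lemma has_card_transfer (T1 T2 : eqType) (P1 : T1 -> bool) (P2 : T2 -> bool)
    (F : T1 -> T2) (G : T2 -> T1) :
  (forall x, P1 x -> P2 (F x)) -> (forall x, P1 x -> G (F x) = x) ->
  (forall y, P2 y -> exists2 x, P1 x & F x = y) ->
  forall n, has_card P1 n -> has_card P2 n.
Proof.
move=> PF GF onto n [s [us ms <-]]; exists (map F s); split; last exact: size_map.
- rewrite map_inj_in_uniq // => x y; rewrite !ms => Px Py E.
  by rewrite -(GF _ Px) E GF.
- move=> y; apply/mapP/idP => [[x]|/onto [x Px <-]]; last by exists x; rewrite ?ms.
  by rewrite ms => Px ->; apply: PF.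
Qed.

Lemma has_card_bij (T1 T2 : eqType) (P1 : T1 -> bool) (P2 : T2 -> bool)
    (F : T1 -> T2) (G : T2 -> T1) :
  (forall x, P1 x -> P2 (F x)) -> (forall y, P2 y -> P1 (G y)) ->
  (forall x, P1 x -> G (F x) = x) -> (forall y, P2 y -> F (G y) = y) ->
  forall n, has_card P1 n <-> has_card P2 n.
Proof.
move=> PF PG GF FG n; split; apply: has_card_transfer; eauto.
Qed.

Lemma pa_stateP (T : eqType) (X : seq (seq T)) p v :
  p ++ v \in X -> v != [::] -> pa_state X p.
Proof.
move=> Hx Hv; apply/hasP; exists (p ++ v) => //.
by rewrite prefix_prefix size_cat -{1}(addn0 (size p)) ltn_add2l lt0n size_eq0.
Qed.

Lemma pa_state_nil (T : eqType) (X : seq (seq T)) x :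
  x \in X -> x != [::] -> pa_state X [::].
Proof. exact: (@pa_stateP _ _ [::] x). Qed.

Lemma rcons_nil (T : eqType) (p : seq T) a : rcons p a != [::].
Proof. by case: p. Qed.

Lemma pa_edge_state (T : eqType) (X : seq (seq T)) p a p' :
  pa_edge X p a p' -> pa_state X p && pa_state X p'.
Proof.
case/andP=> -> /orP[/andP[/eqP -> ->]//|/andP[/eqP -> H]].
exact: pa_state_nil H (rcons_nil _ _).
Qed.

Lemma pa_path_state (T : eqType) (X : seq (seq T)) u :
  forall l p p', is_path (pa_edge X) p u l p' -> pa_state X p -> pa_state X p'.
Proof.
elim: u => [|b u IH] [|p1 l] p p' //=; first by move/eqP <-.
by case/andP=> /pa_edge_state /andP[_ H1] /IH H _; apply: H.
Qed.

Lemma pa_path_suffix (T : eqType) (X : seq (seq T)) x :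
  forall p, p ++ x \in X -> x != [::] -> exists l, is_path (pa_edge X) p x l [::].
Proof.
elim: x => [|b x IH] p // Hx _.
have Hp : pa_state X p by apply: pa_stateP Hx _.
case: x IH Hx => [|c x] IH Hx.
  by exists [:: [::]]; rewrite /= andbT /pa_edge Hp -cats1 Hx orbT.
have Hx' : rcons p b ++ c :: x \in X by rewrite cat_rcons.
have [l Hl] := IH _ Hx' isT.
exists (rcons p b :: l); apply/andP; split=> //.
by rewrite /pa_edge Hp eqxx (pa_stateP Hx').
Qed.

Lemma pa_path_star (T : eqType) (X : seq (seq T)) f :
  all (fun x => x != [::]) X -> all (mem X) f ->
  exists l, is_path (pa_edge X) [::] (flatten f) l [::].
Proof.
move=> hX; elim: f => [|x f IH] /=; first by exists [::].
case/andP=> Hx /IH [l Hl].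
have [l0 H0] := @pa_path_suffix _ X x [::] Hx (allP hX _ Hx).
by exists (l0 ++ l); apply: is_path_cat H0 Hl.
Qed.

(* [cut o w l acc] cuts the word w, read along the state list l, at each
   visit of the state o; it sends a loop at o to its sequence of first
   returns. *)
Fixpoint cut (T S : eqType) (o : S) (w : seq T) (l : seq S) (acc : seq T) :
    seq (seq T) :=
  match w, l with
  | a :: w', s :: l' => if s == o then rcons acc a :: cut o w' l' [::]
                        else cut o w' l' (rcons acc a)
  | _, _ => [::]
  end.

Lemma cut_cat (T S : eqType) (o : S) (w : seq T) l l0 : forall u acc,
  size u = (size l0).+1 -> all (fun s => s != o) l0 ->
  cut o (u ++ w) (rcons l0 o ++ l) acc = (acc ++ u) :: cut o w l [::].
Proof.
elim: l0 => [|s l0 IH] [|a u] acc //=.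
  by case: u => //= _ _; rewrite eqxx cats1.
by move=> [Hs] /andP[/negbTE -> Hall]; rewrite IH // cat_rcons.
Qed.

Lemma mem_take_last (T : eqType) (l0 l' : seq T) s : l' != [::] ->
  s \in take (size (l0 ++ s :: l')).-1 (l0 ++ s :: l').
Proof.
case: l' => // s' l' _; elim: l0 => [|x l0 IH] /=; first by rewrite mem_head.
by move: IH; rewrite size_cat /= addnS /= => IH; rewrite in_cons IH orbT.
Qed.

Section Wreath.
Variables (A B : finType) (Y : seq (seq B)) (Z : seq (seq A)) (beta : B -> seq A).
Hypothesis hZ : all (fun z => z != [::]) Z.
Hypothesis hbinj : injective beta.
Hypothesis hbin : forall b, beta b \in Z.

Local Notation wr := (wr_edge Y Z beta).
Local Notation origin := (([::], [::]) : seq B * seq A).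

Lemma beta_nil b : beta b != [::].
Proof. exact: (allP hZ _ (hbin b)). Qed.

Lemma wr_read q p a : pa_state Y q -> pa_state Z p -> pa_state Z (rcons p a) ->
  wr (q, p) a (q, rcons p a).
Proof.
move=> Hq Hp Hpa; rewrite /wr_edge /= Hq Hp Hpa /=.
by apply/existsP; exists None; rewrite /tr_edge Hp !eqxx Hpa.
Qed.

Lemma wr_emit q p a b q' : pa_state Z p -> rcons p a = beta b ->
  pa_edge Y q b q' -> wr (q, p) a (q', [::]).
Proof.
move=> Hp Hpa He; case/andP: (pa_edge_state He) => Hq Hq'.
rewrite /wr_edge /= Hq Hp Hq' (pa_state_nil (hbin b) (beta_nil b)) /=.
by apply/existsP; exists (Some b); rewrite /tr_edge Hp Hpa !eqxx hbin.
Qed.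

(* The states visited by A reading the suffix u of beta b (after the prefix
   p) from (q, p), when q -b-> q' in B: the P-component climbs along the
   prefixes of beta b and the run ends in (q', 1). *)
Fixpoint letter_run (q q' : seq B) (p : seq A) (u : seq A) : seq (seq B * seq A) :=
  match u with
  | [::] => [::]
  | a :: u' => if u' is [::] then [:: (q', [::])]
               else (q, rcons p a) :: letter_run q q' (rcons p a) u'
  end.

Lemma letter_run_path q b q' : pa_edge Y q b q' ->
  forall u p, p ++ u = beta b -> u != [::] ->
  is_path wr (q, p) u (letter_run q q' p u) (q', [::]).
Proof.
move=> He; elim=> [|a u IH] p // Hpu _.
have Hp : pa_state Z p by apply: (@pa_stateP _ _ _ (a :: u)) => //; rewrite Hpu.
case: u IH Hpu => [|c u] IH Hpu /=.
  by rewrite eqxx andbT; apply: (wr_emit Hp _ He); rewrite -cats1.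
have Hq : pa_state Y q by case/andP: (pa_edge_state He).
have Hpa : pa_state Z (rcons p a).
  by apply: (@pa_stateP _ _ _ (c :: u)) => //; rewrite cat_rcons Hpu.
by rewrite wr_read //; apply: IH; rewrite ?cat_rcons.
Qed.

Lemma letter_run_shape q q' p u : u != [::] -> exists l0,
  letter_run q q' p u = rcons l0 (q', [::]) /\ all (fun s => s.2 != [::]) l0.
Proof.
elim: u p => [|a u IH] p // _; case: u IH => [|c u] IH; first by exists [::].
have [l0 [E H]] := IH (rcons p a) isT.
have -> : letter_run q q' p [:: a, c & u] =
  (q, rcons p a) :: letter_run q q' (rcons p a) (c :: u) by [].
by exists ((q, rcons p a) :: l0); rewrite E /= rcons_nil.
Qed.

Lemma run_first_letter w : forall l q p t, is_path wr (q, p) w l t ->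
  t.2 = [::] -> w != [::] ->
  exists b q' u w' l', [/\ w = u ++ w', p ++ u = beta b, u != [::] &
     [/\ l = letter_run q q' p u ++ l', pa_edge Y q b q' &
         is_path wr (q', [::]) w' l' t]].
Proof.
elim: w => [|a w IH] [|[q1 p1] l] q p t //= /andP[He Hp] Ht _.
case/and5P: He => _ _ _ _ /existsP[[b|] /andP[Htr Ho]].
  case/andP: Htr => _ /andP[/andP[/eqP /= Ep1 /eqP Eb] _]; subst p1.
  by exists b, q1, [:: a], w, l; rewrite cats1.
case/andP: Htr => _ /andP[/eqP /= Ep1 _]; move/eqP: Ho => /= Eq1; subst p1 q1.
case: w IH Hp => [|c w] IH Hp.
  by case/is_path_nil: Hp => _ Et; move: Ht (rcons_nil p a); rewrite -Et => /= ->.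
have [b [q' [u [w' [l' [-> Eu Hu [El He' Hp']]]]]]] := IH _ _ _ _ Hp Ht isT.
exists b, q', (a :: u), w', l'; split; rewrite -?cat_rcons //.
by case: u Eu Hu El => // c' u' _ _ ->.
Qed.

Fixpoint word_run (q : seq B) (y : seq B) : seq (seq B * seq A) :=
  match y with
  | [::] => [::]
  | b :: y' => if y' is [::] then letter_run q [::] [::] (beta b)
               else letter_run q (rcons q b) [::] (beta b) ++ word_run (rcons q b) y'
  end.

Lemma word_run_path y : forall q, q ++ y \in Y -> y != [::] ->
  is_path wr (q, [::]) (morph beta y) (word_run q y) origin.
Proof.
elim: y => [|b y IH] q // Hy _.
have Hq : pa_state Y q by apply: (@pa_stateP _ _ _ (b :: y)).
rewrite /morph /=; case: y IH Hy => [|c y] IH Hy.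
  rewrite cats0; apply: letter_run_path (beta_nil b) => //.
  by rewrite /pa_edge Hq eqxx -cats1 Hy orbT.
have Hy' : rcons q b ++ c :: y \in Y by rewrite cat_rcons.
have He : pa_edge Y q b (rcons q b).
  by rewrite /pa_edge Hq eqxx (pa_stateP Hy').
apply: is_path_cat (IH _ Hy' isT).
exact: letter_run_path He _ [::] erefl (beta_nil b).
Qed.

Lemma word_run_shape y q : y != [::] -> exists l0,
  word_run q y = rcons l0 origin /\ all (fun s => s != origin) l0.
Proof.
have no_origin l : all (fun s : seq B * seq A => s.2 != [::]) l ->
    all (fun s => s != origin) l.
  by apply: sub_all => -[q' [|a' p']] // _; rewrite xpair_eqE andbF.
elim: y q => [|b y IH] q // _; case: y IH => [|c y] IH.
  have [l0 [E H]] := letter_run_shape q [::] [::] (beta_nil b).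
  by exists l0; rewrite /= E no_origin.
have [l0 [E H]] := letter_run_shape q (rcons q b) [::] (beta_nil b).
have [l1 [E1 H1]] := IH (rcons q b) isT.
have -> : word_run q [:: b, c & y] =
  letter_run q (rcons q b) [::] (beta b) ++ word_run (rcons q b) (c :: y) by [].
exists (l0 ++ (rcons q b, [::]) :: l1); rewrite E E1 cat_rcons rcons_cat.
by rewrite all_cat no_origin //= H1 xpair_eqE (negbTE (rcons_nil _ _)).
Qed.

Lemma run_first_word w l q : is_path wr (q, [::]) w l origin -> w != [::] ->
  exists y w' l', [/\ q ++ y \in Y, y != [::], w = morph beta y ++ w',
                      l = word_run q y ++ l' & is_path wr origin w' l' origin].
Proof.
have [n] := ubnP (size w); elim: n w l q => // n IHn w l q Hn Hp Hw.
have [b [q' [u [w1 [l1 [Ew Eu Hu [El He Hp1]]]]]]] := run_first_letter Hp erefl Hw.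
move: Eu => /= Eu; subst u.
case/andP: He => _ /orP[/andP[/eqP Eq' _]|/andP[/eqP Eq' Hin]]; subst q'.
  case: w1 Ew Hp1 => [|c w1] Ew Hp1.
    by case/is_path_nil: Hp1 => _ /pair_equal_spec[/eqP]; rewrite (negbTE (rcons_nil _ _)).
  have Hs : size (c :: w1) < n.
    move: Hn (beta_nil b); rewrite Ew size_cat ltnS -size_eq0 -lt0n => Hn Hb.
    by apply: leq_trans Hn; rewrite -add1n leq_add2r.
  have [y [w' [l' [Hy Hy0 Ew1 El1 Hp']]]] := IHn _ _ _ Hs Hp1 isT.
  exists (b :: y), w', l'; split; rewrite -?cat_rcons //.
  - by rewrite Ew Ew1 /morph /= catA.
  - by rewrite El El1 /=; case: y Hy0 {Hy Ew1 El1} => // ? ? _; rewrite catA.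
by exists [:: b], w1, l1; rewrite /morph /= cats0 cats1.
Qed.

Lemma first_return_edge q q' b :
  pa_edge Y q b q' <->
  exists l, is_path wr (q, [::]) (beta b) l (q', [::])
            /\ all (fun s : seq B * seq A => s.2 != [::]) (take (size l).-1 l).
Proof.
split=> [He|[l [Hp Hall]]].
  exists (letter_run q q' [::] (beta b)); split.
    exact: letter_run_path He _ [::] erefl (beta_nil b).
  have [l0 [-> H]] := letter_run_shape q q' [::] (beta_nil b).
  by rewrite size_rcons /= -cats1 take_size_cat.
have [b' [q'' [u [w' [l' [Ew Eu Hu [El He Hp']]]]]]] := run_first_letter Hp erefl (beta_nil b).
move: Eu => /= Eu; subst u.
case: w' Ew Hp' => [|c w'] Ew Hp'.
  by case/is_path_nil: Hp' => _ [<-]; move: Ew; rewrite cats0 => /hbinj ->.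
(* otherwise the intermediate state (q'', 1) would be a return to Q x {1} *)
have [l0 [E _]] := letter_run_shape q q'' [::] (beta_nil b').
have Hl' : l' != [::] by rewrite -size_eq0 (is_path_size Hp').
move: Hall; rewrite El E -cats1 -catA /= => /allP /(_ _ (mem_take_last l0 _ Hl')).
by rewrite eqxx.
Qed.

Hypothesis hY : all (fun y => y != [::]) Y.
Hypothesis htrim : {in Y &, injective (morph beta)}.

(* The composition X = beta(Y); by trimness a word of X determines the
   word of Y it comes from. *)
Definition composition : seq (seq A) := map (morph beta) Y.

Definition decode (x : seq A) : seq B := nth [::] Y (index x composition).

Lemma decodeK y : y \in Y -> decode (morph beta y) = y.
Proof. by move=> Hy; rewrite /decode /composition nth_index_map. Qed.

Definition loop_of (f : seq (seq A)) : seq (seq B * seq A) :=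
  flatten (map (fun x => word_run [::] (decode x)) f).

Lemma cut_word_run y w l : y \in Y ->
  cut origin (morph beta y ++ w) (word_run [::] y ++ l) [::]
  = morph beta y :: cut origin w l [::].
Proof.
move=> Hy; have Hy0 : y != [::] by apply: (allP hY).
have [l0 [E Hall]] := word_run_shape [::] Hy0.
have Hsz := is_path_size (@word_run_path y [::] Hy Hy0); rewrite E size_rcons in Hsz.
by rewrite E cut_cat.
Qed.

Lemma loop_cut w l : is_path wr origin w l origin ->
  factorization composition w (cut origin w l [::]) /\
  loop_of (cut origin w l [::]) = l.
Proof.
have [n] := ubnP (size w); elim: n w l => // n IHn [|a w] l Hn Hp.
  by case/is_path_nil: Hp => -> _.
have [y [w' [l' [Hy Hy0 Ew El Hp']]]] := run_first_word Hp isT.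
have Hs : size w' < n.
  have [l0 [E _]] := word_run_shape [::] Hy0.
  have := is_path_size (@word_run_path y [::] Hy Hy0); rewrite E size_rcons.
  move: Hn; rewrite Ew size_cat => Hn Hsz; rewrite -Hsz addSn ltnS in Hn.
  exact: leq_ltn_trans (leq_addl _ _) Hn.
have [/andP[Hf /eqP Hw'] Hl'] := IHn _ _ Hs Hp'.
rewrite Ew El cut_word_run //; split.
  by rewrite /factorization /= map_f //= Hf Hw' eqxx.
by rewrite /loop_of /= decodeK // -/(loop_of _) Hl'.
Qed.

Lemma factorization_loop f w : factorization composition w f ->
  is_path wr origin w (loop_of f) origin /\ cut origin w (loop_of f) [::] = f.
Proof.
elim: f w => [|x f IH] w /andP[Hall /eqP <-] //=.
case/andP: Hall => /mapP [y Hy ->] Hall.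
have [Hp Hc] := IH (flatten f) (introT andP (conj Hall (eqxx _))).
rewrite /loop_of /= decodeK // -/(loop_of _) cut_word_run // Hc; split=> //.
exact: is_path_cat (@word_run_path y [::] Hy (allP hY _ Hy)) Hp.
Qed.

(* (a): cutting loops at (1, 1) is a bijection onto factorizations. *)
Lemma recognition w n :
  has_card (fun l => is_path wr origin w l origin) n <->
  has_card (factorization composition w) n.
Proof.
apply: (has_card_bij (F := fun l => cut origin w l [::]) (G := loop_of)).
- by move=> l /loop_cut [].
- by move=> f /factorization_loop [].
- by move=> l /loop_cut [].
- by move=> f /factorization_loop [].
Qed.

Lemma wr_project s a s' : wr s a s' -> pa_edge Z s.2 a s'.2.
Proof.
case/and5P=> _ Hp _ _ /existsP[[b|] /andP[Htr _]]; rewrite /pa_edge Hp /=.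
  by case/andP: Htr => _ /andP[/andP[-> /eqP ->] ->]; rewrite orbT.
by case/andP: Htr => _ /andP[-> ->].
Qed.

Lemma run_project w : forall l s t, is_path wr s w l t ->
  is_path (pa_edge Z) s.2 w (map snd l) t.2.
Proof.
elim: w => [|a w IH] [|s' l] s t //=; first by move/eqP ->.
by case/andP=> /wr_project -> /IH.
Qed.

Hypothesis hbsurj : forall z, z \in Z -> exists b, beta b = z.
Hypothesis hocc : forall b : B, has (fun y => b \in y) Y.

Lemma run_lift w : forall lp p p', is_path (pa_edge Z) p w lp p' ->
  exists bs, forall q lq q', is_path (pa_edge Y) q bs lq q' -> pa_state Y q ->
  exists l, is_path wr (q, p) w l (q', p').
Proof.
elim: w => [|a w IH] [|p1 lp] p p' //=.
  by move/eqP=> <-; exists [::] => q [|//] q' /= /eqP <- _; exists [::].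
case/andP=> /andP[Hp /orP[/andP[/eqP Ep1 Hp1]|/andP[/eqP Ep1 Hin]]] /IH [bs Hbs];
  subst p1.
  exists bs => q lq q' Hq Hqs; have [l Hl] := Hbs _ _ _ Hq Hqs.
  by exists ((q, rcons p a) :: l); rewrite /= wr_read.
have [b Eb] := hbsurj Hin.
exists (b :: bs) => q [|q1 lq] q' //= /andP[He Hq] Hqs.
have /andP[_ Hq1] := pa_edge_state He.
have [l Hl] := Hbs _ _ _ Hq Hq1.
by exists ((q1, [::]) :: l); rewrite /= Hl andbT (wr_emit Hp _ He).
Qed.

(* Since every letter of B occurs in Y, the prefix automaton of Y has its
   initial state 1 as soon as Z is nonempty. *)
Lemma pa_state_Y_nil p : pa_state Z p -> pa_state Y [::].
Proof.
case/hasP=> z Hz _; have [b _] := hbsurj Hz.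
case/hasP: (hocc b) => y Hy Hb.
by apply: (pa_state_nil Hy); case: (y) Hb.
Qed.

(* (b): if Y is complete, rho(q, p) = p is a reduction of A onto the prefix
   automaton of Z; completeness lets B read any emitted word from some
   state of Q. *)
Lemma reduction : complete Y ->
  is_reduction (fun s : seq B * seq A => pa_state Y s.1 && pa_state Z s.2) wr
    origin origin (pa_state Z) (pa_edge Z) [::] [::] (fun s => s.2).
Proof.
move=> Hc; split => //.
- by move=> x /andP[].
- by move=> p Hp; exists ([::], p); rewrite /= (pa_state_Y_nil Hp).
move=> p p' Hp Hp' w; split; last first.
  by case=> x [x' [_ _ <- <- [l Hl]]]; exists (map snd l); apply: run_project.
case=> lp /run_lift [bs Hbs].
have [f [Hf /infixP [u1 [u2 Ef]]]] := Hc bs.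
have [lq Hlq] := pa_path_star hY Hf; rewrite Ef in Hlq.
have [m [lq1 [lq2 [_ H1 H2]]]] := is_path_split Hlq.
have [m' [lq3 [lq4 [_ H3 _]]]] := is_path_split H2.
have Hm : pa_state Y m := pa_path_state H1 (pa_state_Y_nil Hp).
have Hm' : pa_state Y m' := pa_path_state H3 Hm.
have [l Hl] := Hbs _ _ _ H3 Hm.
by exists (m, p), (m', p'); split; rewrite /= ?Hm ?Hm' ?Hp ?Hp' //; exists l.
Qed.

End Wreath.

Theorem mainTheorem5 (A B : finType) (Y : seq (seq B)) (Z : seq (seq A))
    (beta : B -> seq A)
    (hY : all (fun y => y != [::]) Y)
    (hZ : all (fun z => z != [::]) Z)
    (hbinj : injective beta)
    (hbin : forall b, beta b \in Z)
    (hbsurj : forall z, z \in Z -> exists b, beta b = z)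
    (hocc : forall b : B, has (fun y => b \in y) Y)
    (htrim : {in Y &, injective (morph beta)}) :
  let X := map (morph beta) Y in
  let Astate := fun s : seq B * seq A => pa_state Y s.1 && pa_state Z s.2 in
  (forall (w : seq A) (n : nat),
     has_card (fun l => is_path (wr_edge Y Z beta) ([::], [::]) w l ([::], [::])) n
     <-> has_card (factorization X w) n)
  /\
  (complete Y ->
     is_reduction Astate (wr_edge Y Z beta) ([::], [::]) ([::], [::])
                  (pa_state Z) (pa_edge Z) [::] [::]
                  (fun s : seq B * seq A => s.2))
  /\
  (forall (q q' : seq B) (b : B), pa_state Y q -> pa_state Y q' ->
     pa_edge Y q b q' <->
     exists l, is_path (wr_edge Y Z beta) (q, [::]) (beta b) l (q', [::])
               /\ all (fun s : seq B * seq A => s.2 != [::]) (take (size l).-1 l)).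
Proof.
move=> X Astate; split; [|split].
- exact: recognition.
- exact: reduction.
- by move=> q q' b _ _; apply: first_return_edge.
Qed.
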